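(* Let $R$ be an idempotent semiring finitely generated by a finite set $R_0$, let $B$ be an $R$-semimodule finitely generated by a finite set $B_0$, and let $n\ge2$. Let $\alpha:\Omega_n^*\to(R,\cdot,1)$ be a monoid morphism such that for some $b_0,b_1\in B$ and all $w\in\Omega_n^*$: $\alpha(w)\cdot b_0\ge b_1$ iff $w\in\mathcal D_n$. Suppose moreover that $b_1$ satisfies: for all $c_1,c_2\in B$, if $c_1+c_2\ge b_1$ then $c_1\ge b_1$ or $c_2\ge b_1$. Then for every context-free language $\mathcal L\subseteq A^*$ there exist a weighted $\mathbb T_R$-automaton $M$ with output semimodule $B$ and a state $x_0$ such that $\mathcal L=\{w\in A^*\mid \llbracket x_0\rrbracket_M(w)\ge b_1\}$.
   Context: $A$ is a finite input alphabet. For a semiring $R$, the semimodule monad $\mathbb T_R$ sends $X$ to the free left $R$-semimodule on $X$ (finitely supported maps $X\to R$, i.e. formal sums $r_1x_1+\dots+r_kx_k$); its algebras are left $R$-semimodules. If $R$ is idempotent ($1+1=1$), a semimodule $B$ is partially ordered by $b\le c$ iff $b+c=c$. $\Omega_n=\{(_1,)_1,\dots,(_n,)_n\}$ and $\mathcal D_n\subseteq\Omega_n^*$ is the Dyck language of balanced parenthesis words. A weighted $\mathbb T_R$-automaton consists of a finite set $X$ and maps $o:X\to B$, $t:A\times X\to\mathbb T_R X$; its trace semantics $\llbracket x\rrbracket_M:A^*\to B$ is $\llbracket x\rrbracket_M(w)=o(\partial_w(\eta(x)))$ where $\mathbb T_RX$ is made an $L$-coalgebra ($LY=B\times Y^A$)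 by the unique semimodule morphism $\mathbb T_RX\to B\times(\mathbb T_RX)^A$ extending $x\mapsto(o(x),\lambda a.t(a,x))$; explicitly $\llbracket x\rrbracket_M(\epsilon)=o(x)$ and $\llbracket x\rrbracket_M(au)=\sum_y t(a,x)(y)\cdot\llbracket y\rrbracket_M(u)$. *)

From HB Require Import structures.
From mathcomp Require Import all_boot all_order all_algebra.
Set Implicit Arguments. Unset Strict Implicit. Unset Printing Implicit Defensive.
Import GRing.Theory.
Local Open Scope ring_scope.

Definition idempotent_sr (R : pzSemiRingType) : Prop := (1 + 1 : R) = 1.

Inductive sr_gen (R : pzSemiRingType) (R0 : seq R) : R -> Prop :=
| sr_gen_base r : r \in R0 -> sr_gen R0 r
| sr_gen_0 : sr_gen R0 0
| sr_gen_1 : sr_gen R0 1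
| sr_gen_add r s : sr_gen R0 r -> sr_gen R0 s -> sr_gen R0 (r + s)
| sr_gen_mul r s : sr_gen R0 r -> sr_gen R0 s -> sr_gen R0 (r * s).

Definition sr_fin_gen (R : pzSemiRingType) (R0 : seq R) : Prop :=
  forall r : R, sr_gen R0 r.

Definition smod_fin_gen (R : pzSemiRingType) (B : lSemiModType R) (B0 : seq B) : Prop :=
  forall b : B, exists f : B -> R, b = \sum_(c <- B0) f c *: c.

Definition sle (R : pzSemiRingType) (B : lSemiModType R) (b c : B) : Prop := b + c = c.

(* Omega_n : (i, true) = "(_i", (i, false) = ")_i" *)
Definition paren (n : nat) : finType := ('I_n * bool)%type.

Inductive dyck (n : nat) : seq (paren n) -> Prop :=
| dyck_nil : dyck [::]
| dyck_wrap (i : 'I_n) (w : seq (paren n)) :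
    dyck w -> dyck ((i, true) :: rcons w (i, false))
| dyck_cat u v : dyck u -> dyck v -> dyck (u ++ v).

Definition monoid_morph (R : pzSemiRingType) (n : nat) (alpha : seq (paren n) -> R) : Prop :=
  alpha [::] = 1 /\ forall u v, alpha (u ++ v) = alpha u * alpha v.

(* Trace semantics of a weighted T_R-automaton with state set X, output
   o : X -> B and transitions t a x : X -> R (an element of T_R X). *)
Fixpoint wsem (R : pzSemiRingType) (B : lSemiModType R) (A X : finType)
  (o : X -> B) (t : A -> X -> X -> R) (x : X) (w : seq A) : B :=
  match w with
  | [::] => o x
  | a :: u => \sum_(y : X) t a x y *: wsem o t y u
  end.

Inductive cf_sym (N A : finType) (P : seq (N * seq (N + A)%type))
  : (N + A)%type -> seq A -> Prop :=
| cf_term (a : A) : cf_sym P (inr a) [:: a]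
| cf_nonterm (X : N) (rhs : seq (N + A)%type) (w : seq A) :
    (X, rhs) \in P -> cf_seq P rhs w -> cf_sym P (inl X) w
with cf_seq (N A : finType) (P : seq (N * seq (N + A)%type))
  : seq (N + A)%type -> seq A -> Prop :=
| cf_nil : cf_seq P [::] [::]
| cf_cons s rhs u v : cf_sym P s u -> cf_seq P rhs v -> cf_seq P (s :: rhs) (u ++ v).

Definition context_free (A : finType) (L : seq A -> Prop) : Prop :=
  exists (N : finType) (S : N) (P : seq (N * seq (N + A)%type)),
    forall w, L w <-> cf_sym P (inl S) w.

(* A context-free grammar is simulated by a real-time
   nondeterministic pushdown automaton: every transition reads exactly one
   letter, pops at most one stack symbol and pushes at most two.  Its states
   (which double as stack symbols) are parsing tasks: a suffix of a right-hand
   side still to be derived, or a left-corner obligation (X, s) "s has been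
   derived, complete it into an X".  Reading a letter turns a task into at most
   three new tasks; those deriving the empty word are dropped.  The stack is
   never stored: each transition carries a word over the Dyck alphabet that
   pops and pushes the codes of stack symbols (written with two bracket kinds),
   so a run is a valid pushdown run exactly when the concatenated bracket word
   is a Dyck word.  Finally, a weighted automaton summing alpha(label) over the
   finitely many labelled transitions satisfies
     alpha(u) * [[x]](w) >= b1  <=>  some labelled run on w, prefixed by u,
                                      ends in a final state with a Dyck label;
   here primeness of b1 turns ">= b1" of a sum into an existential, and the
   hypothesis on b0 turns the output test into Dyck membership. *)

From Stdlib Require Import ClassicalEpsilon.
From HB Require Import structures.
From mathcomp Require Import all_boot all_order all_algebra.
Set Implicit Arguments. Unset Strict Implicit. Unset Printing Implicit Defensive.
Import GRing.Theory.

Section DyckStack.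
Variable n : nat.

Fixpoint bracket_run (s : seq 'I_n) (w : seq (paren n)) : option (seq 'I_n) :=
  match w with
  | [::] => Some s
  | p :: w' => if p.2 then bracket_run (p.1 :: s) w'
              else if s is j :: s' then
                     if p.1 == j then bracket_run s' w' else None
                   else None
  end.

Lemma bracket_run_cat s u v :
  bracket_run s (u ++ v) = obind (bracket_run^~ v) (bracket_run s u).
Proof.
elim: u s => [|[i b] u IH] s //=.
by case: b => //; case: s => // j s; case: eqP.
Qed.

Lemma bracket_run_catS s s' u v :
  bracket_run s u = Some s' -> bracket_run s (u ++ v) = bracket_run s' v.
Proof. by move=> H; rewrite bracket_run_cat H. Qed.

Lemma dyck_bracket_run w : dyck w -> forall s, bracket_run s w = Some s.
Proof.
elim => //= [i w' _ IH|u v _ IHu _ IHv] s.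
  by rewrite -cats1 bracket_run_cat IH /= eqxx.
by rewrite bracket_run_cat IHu /= IHv.
Qed.

(* [closes s w]: w = d0 )_{s1} d1 )_{s2} ... with Dyck words d_k, i.e. w
   closes exactly the pending brackets s; the invariant for the converse. *)
Fixpoint closes (s : seq 'I_n) (w : seq (paren n)) : Prop :=
  if s is i :: s' then
    exists d r, [/\ dyck d, w = d ++ (i, false) :: r & closes s' r]
  else dyck w.

Lemma closes_dyck_cat s e r : dyck e -> closes s r -> closes s (e ++ r).
Proof.
case: s => [|i s] /= He; first exact: dyck_cat.
move=> [d [r' [Hd -> Hc]]]; exists (e ++ d), r'.
by split; [exact: dyck_cat | rewrite catA |].
Qed.

Lemma bracket_run_closes w s : bracket_run s w = Some [::] -> closes s w.
Proof.
elim: w s => [|[i b] w IH] s /=; first by case=> ->; exact: dyck_nil.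
case: b.
  move=> /IH /= [d [r [Hd -> Hc]]].
  have := closes_dyck_cat (dyck_wrap i Hd) Hc.
  by rewrite -cats1 /= -catA.
case: s => // j s; case: eqP => // -> /IH Hc.
by exists [::], w; split => //; exact: dyck_nil.
Qed.

Lemma dyckE w : dyck w <-> bracket_run [::] w = Some [::].
Proof. by split=> [/dyck_bracket_run|/bracket_run_closes]. Qed.

End DyckStack.

Section StackCode.
(* The symbols of a finite alphabet Y are coded by the bracket stacks
   i0^k i1 (k the rank of the symbol); two distinct bracket kinds suffice. *)
Variables (n : nat) (i0 i1 : 'I_n) (Y : finType).
Hypothesis i0_neq_i1 : i0 != i1.

Definition code (y : Y) : seq 'I_n := nseq (enum_rank y) i0 ++ [:: i1].
Definition push_word (y : Y) : seq (paren n) :=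
  (i1, true) :: nseq (enum_rank y) (i0, true).
Definition pop_word (y : Y) : seq (paren n) :=
  nseq (enum_rank y) (i0, false) ++ [:: (i1, false)].
Definition stack_code (stk : seq Y) : seq 'I_n := flatten (map code stk).

Lemma stack_code_cat stk1 stk2 :
  stack_code (stk1 ++ stk2) = stack_code stk1 ++ stack_code stk2.
Proof. by rewrite /stack_code map_cat flatten_cat. Qed.

Lemma stack_code_nil stk : stack_code stk = [::] -> stk = [::].
Proof. by case: stk => //= y stk; rewrite /stack_code /= /code -catA; case: nseq. Qed.

Lemma bracket_run_push s y : bracket_run s (push_word y) = Some (code y ++ s).
Proof.
rewrite /code -catA /=; elim: (nat_of_ord _) (i1 :: s) => //= k IH t.
by rewrite IH; congr Some; elim: k {IH} => //= k ->.
Qed.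

Lemma bracket_run_pop s y : bracket_run (code y ++ s) (pop_word y) = Some s.
Proof. by rewrite /code /pop_word -catA; elim: (nat_of_ord _) => /= [|k ->]; rewrite eqxx. Qed.

Lemma bracket_run_pop_inv x y s s' :
  bracket_run (code x ++ s) (pop_word y) = Some s' -> x = y /\ s' = s.
Proof.
rewrite /code /pop_word -catA.
have code_eq k k' : bracket_run (nseq k i0 ++ i1 :: s)
    (nseq k' (i0, false) ++ [:: (i1, false)]) = Some s' -> k = k' /\ s' = s.
  elim: k' k => [|k' IH] [|k] /=; rewrite ?eqxx ?(negbTE i0_neq_i1).
  - by case.
  - by rewrite eq_sym (negbTE i0_neq_i1).
  - by [].
  - by move/IH => [-> ->].
by move/code_eq => [/val_inj/enum_rank_inj -> ->].
Qed.

Lemma bracket_run_pop_stack stk y s' :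
  bracket_run (stack_code stk) (pop_word y) = Some s' ->
  exists stk', stk = y :: stk' /\ s' = stack_code stk'.
Proof.
case: stk => [|x stk] /=; first by rewrite /pop_word; case: (nat_of_ord _).
by move/bracket_run_pop_inv => [-> ->]; exists stk.
Qed.

End StackCode.

Definition prop_bool (Q : Prop) : bool :=
  if excluded_middle_informative Q then true else false.

Lemma prop_boolP (Q : Prop) : reflect Q (prop_bool Q).
Proof. by rewrite /prop_bool; case: excluded_middle_informative => H; constructor. Qed.

Section PrimeSums.
Local Open Scope ring_scope.
Variables (R : pzSemiRingType) (B : lSemiModType R) (b1 : B).
Hypothesis hprime : forall c1 c2 : B, sle b1 (c1 + c2) -> sle b1 c1 \/ sle b1 c2.
Hypothesis b1_nonzero : ~ sle b1 0.

Lemma sle_addl c d : sle b1 c -> sle b1 (c + d).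
Proof. by rewrite /sle => H; rewrite addrA H. Qed.

Lemma sle_addr c d : sle b1 d -> sle b1 (c + d).
Proof. by rewrite addrC; exact: sle_addl. Qed.

Lemma sle_sum (I : eqType) (r : seq I) (Q : pred I) (F : I -> B) :
  sle b1 (\sum_(i <- r | Q i) F i) <-> exists2 i, i \in r & Q i /\ sle b1 (F i).
Proof.
elim: r => [|i r IH]; first by rewrite big_nil; split=> // -[].
rewrite big_cons; split.
- case: ifP => Qi; last by move/IH => [j Hj HQ]; exists j; rewrite ?inE ?Hj ?orbT.
  by case/hprime => [H|/IH [j Hj HQ]]; [exists i; rewrite ?inE ?eqxx | exists j; rewrite ?inE ?Hj ?orbT].
- move=> [j]; rewrite inE => /orP [/eqP ->|Hj] [Qj Hs].
    by rewrite Qj; exact: sle_addl.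
  have Hr : sle b1 (\sum_(k <- r | Q k) F k) by apply/IH; exists j.
  by case: ifP => _ //; exact: sle_addr.
Qed.

Lemma sle_sum_fin (I : finType) (Q : pred I) (F : I -> B) :
  sle b1 (\sum_(i | Q i) F i) <-> exists i, Q i /\ sle b1 (F i).
Proof.
rewrite sle_sum; split=> [[i _ H]|[i H]]; first by exists i.
by exists i; rewrite ?mem_index_enum.
Qed.

End PrimeSums.

Section DyckControl.
Variables (n : nat) (A X Lab : finType).
Variable step : A -> X -> Lab -> X -> Prop.
Variable label : Lab -> seq (paren n).
Variable final : X -> Prop.

Fixpoint dyck_accepts (u : seq (paren n)) (x : X) (w : seq A) : Prop :=
  if w is a :: w' then exists l y, step a x l y /\ dyck_accepts (u ++ label l) y w'
  else final x /\ dyck u.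

Lemma dyck_accepts_prefix w u x : dyck_accepts u x w -> exists v, dyck (u ++ v).
Proof.
elim: w u x => [|a w IH] u x /=; first by move=> [_ H]; exists [::]; rewrite cats0.
by move=> [l [y [_ /IH [v Hv]]]]; exists (label l ++ v); rewrite catA.
Qed.

Local Open Scope ring_scope.
Variables (R : pzSemiRingType) (B : lSemiModType R).
Variables (alpha : seq (paren n) -> R) (b0 b1 : B).

Definition dyck_trans (a : A) (x y : X) : R :=
  \sum_(l : Lab | prop_bool (step a x l y)) alpha (label l).

Definition dyck_out (x : X) : B := if prop_bool (final x) then b0 else 0.

Hypothesis n_gt0 : (0 < n)%N.
Hypothesis halpha : monoid_morph alpha.
Hypothesis hD : forall w : seq (paren n), sle b1 (alpha w *: b0) <-> dyck w.
Hypothesis hprime : forall c1 c2 : B, sle b1 (c1 + c2) -> sle b1 c1 \/ sle b1 c2.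

(* b1 is not below 0: otherwise the non-Dyck word "(" would be accepted. *)
Lemma b1_not_le0 : ~ sle b1 0.
Proof.
rewrite /sle addr0 => b1_0.
have : sle b1 (alpha [:: (Ordinal n_gt0, true)] *: b0) by rewrite /sle b1_0 add0r.
by move/hD/dyckE.
Qed.

Lemma dyck_trans_scale a x y u (c : B) :
  alpha u *: (dyck_trans a x y *: c) =
  \sum_(l : Lab | prop_bool (step a x l y)) alpha (u ++ label l) *: c.
Proof.
rewrite /dyck_trans scaler_suml scaler_sumr; apply: eq_bigr => l _.
by rewrite scalerA (proj2 halpha).
Qed.

(* The weighted realisation recognises, above b1, exactly the words with an
   accepting run: induction on w, using primeness to split the sums. *)
Lemma wsem_dyck_accepts w u x :
  sle b1 (alpha u *: wsem dyck_out dyck_trans x w) <-> dyck_accepts u x w.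
Proof.
have sum_iff := sle_sum_fin hprime b1_not_le0.
elim: w u x => [|a w IH] u x /=.
  rewrite /dyck_out; case: prop_boolP => Hf; first by rewrite hD; split=> [|[]].
  by rewrite scaler0; split=> [/b1_not_le0|[]].
rewrite scaler_sumr; under eq_bigr => y _ do rewrite dyck_trans_scale.
rewrite sum_iff; split.
  by move=> [y [_ /sum_iff [l [/prop_boolP Hs /IH Ha]]]]; exists l, y.
move=> [l [y [Hs Ha]]]; exists y; split => //.
by apply/sum_iff; exists l; split; [apply/prop_boolP | apply/IH].
Qed.

End DyckControl.

Scheme cf_sym_mind := Induction for cf_sym Sort Prop
  with cf_seq_mind := Induction for cf_seq Sort Prop.
Combined Scheme cf_mutind from cf_sym_mind, cf_seq_mind.

Section Grammar.
Variables N A : finType.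
Variable P : seq (N * seq (N + A)%type).
Local Notation Sym := (N + A)%type.

Lemma cf_seq_cat g1 g2 w1 w2 :
  cf_seq P g1 w1 -> cf_seq P g2 w2 -> cf_seq P (g1 ++ g2) (w1 ++ w2).
Proof. by elim=> //= s g u v Hs _ IH H2; rewrite -catA; apply: cf_cons => //; exact: IH. Qed.

Lemma cf_seq1 s w : cf_seq P [:: s] w <-> cf_sym P s w.
Proof.
split=> [H|H]; last by rewrite -[w]cats0; apply: cf_cons H (cf_nil _).
by inversion H; subst; inversion H4; subst; rewrite cats0.
Qed.

Lemma cf_seq_nil w : cf_seq P [::] w -> w = [::].
Proof. by move=> H; inversion H. Qed.

(* [left_corner X s u]: s occurs in a rule Z -> al s be with al nullable and be
   deriving a prefix of u, where Z is in turn a left corner of X; so any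
   derivation t of s extends to a derivation t ++ u of X. *)
Inductive left_corner (X : N) : Sym -> seq A -> Prop :=
| lc_refl : left_corner X (inl X) [::]
| lc_step Z al s be v u : (Z, al ++ s :: be) \in P -> cf_seq P al [::] ->
    cf_seq P be v -> left_corner X (inl Z) u -> left_corner X s (v ++ u).

Lemma left_corner_trans X Y s u v :
  left_corner Y s u -> left_corner X (inl Y) v -> left_corner X s (u ++ v).
Proof.
elim=> // Z al s' be v' u' Hin Hal Hbe _ IH H; rewrite -catA.
exact: lc_step Hin Hal Hbe (IH H).
Qed.

Lemma left_corner_sound X s u :
  left_corner X s u -> forall t, cf_sym P s t -> cf_sym P (inl X) (t ++ u).
Proof.
elim=> [|Z al s' be v u' Hin Hal Hbe _ IH] t Ht; first by rewrite cats0.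
rewrite catA; apply: IH; apply: cf_nonterm Hin _.
by rewrite -[t ++ v]cat0s; apply: cf_seq_cat => //; exact: cf_cons.
Qed.

Definition leads_with (s : Sym) (a : A) (u : seq A) : Prop :=
  (s = inr a /\ u = [::]) \/ (exists Y, s = inl Y /\ left_corner Y (inr a) u).

Definition seq_leads_with (g : seq Sym) (a : A) (w : seq A) : Prop :=
  exists al s be u v, [/\ g = al ++ s :: be, cf_seq P al [::], leads_with s a u,
                          cf_seq P be v & w = u ++ v].

Lemma leads_with_rule X al s be u v a :
  (X, al ++ s :: be) \in P -> cf_seq P al [::] -> leads_with s a u ->
  cf_seq P be v -> leads_with (inl X) a (u ++ v).
Proof.
move=> Hin Hal [[Es ->]|[Y [Es HY]]] Hbe; subst s; right; exists X; split => //.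
  by rewrite -[v]cats0; exact: lc_step Hin Hal Hbe (lc_refl _).
by apply: left_corner_trans HY _; rewrite -[v]cats0; exact: lc_step Hin Hal Hbe (lc_refl _).
Qed.

Lemma first_letter :
  (forall s w, cf_sym P s w -> forall a w', w = a :: w' -> leads_with s a w') /\
  (forall g w, cf_seq P g w -> forall a w', w = a :: w' -> seq_leads_with g a w').
Proof.
apply: (@cf_mutind N A P
   (fun s w _ => forall a w', w = a :: w' -> leads_with s a w')
   (fun g w _ => forall a w', w = a :: w' -> seq_leads_with g a w')).
- by move=> a0 a w' [<- <-]; left.
- move=> X rhs w Hin _ IH a w' /IH [al [s [be [u [v [Er Hal Hf Hbe ->]]]]]].
  by rewrite Er in Hin; exact: leads_with_rule Hin Hal Hf Hbe.
- by [].
- move=> s g [|a' u'] v Hs IHs Hg IHg a w' /= Hw.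
    have [al [s' [be [u [v' [-> Hal Hf Hbe ->]]]]]] := IHg a w' Hw.
    exists (s :: al), s', be, u, v'; split => //.
    by rewrite -[[::]]/([::] ++ [::]); exact: cf_cons.
  case: Hw => <- <-; exists [::], s, g, u', v; split => //; first exact: cf_nil.
  exact: IHs.
Qed.

Definition task := (seq Sym + (N * Sym))%type.

Definition consume (T : task) (w : seq A) : Prop :=
  match T with
  | inl g => cf_seq P g w
  | inr (X, s) => left_corner X s w
  end.

Inductive consume_all : seq task -> seq A -> Prop :=
| ca_nil : consume_all [::] [::]
| ca_cons T ts u v : consume T u -> consume_all ts v -> consume_all (T :: ts) (u ++ v).

Lemma consume_all_cat t1 t2 w1 w2 :
  consume_all t1 w1 -> consume_all t2 w2 -> consume_all (t1 ++ t2) (w1 ++ w2).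
Proof. by elim=> //= T ts u v HT _ IH H2; rewrite -catA; apply: ca_cons => //; exact: IH. Qed.

Lemma consume_all_split t1 t2 w : consume_all (t1 ++ t2) w ->
  exists w1 w2, [/\ w = w1 ++ w2, consume_all t1 w1 & consume_all t2 w2].
Proof.
elim: t1 w => [|T t1 IH] w /=; first by exists [::], w; split => //; exact: ca_nil.
move=> H; inversion H; subst.
have [w1 [w2 [-> Hw1 Hw2]]] := IH _ H4.
by exists (u ++ w1), w2; split; [rewrite catA | exact: ca_cons |].
Qed.

Lemma consume_all1 T w : consume_all [:: T] w <-> consume T w.
Proof.
split=> [H|H]; last by rewrite -[w]cats0; apply: ca_cons H ca_nil.
by inversion H; subst; inversion H4; subst; rewrite cats0.
Qed.

Definition step_seq (g : seq Sym) (a : A) (tau : seq task) : Prop :=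
  exists al s be, [/\ g = al ++ s :: be, cf_seq P al [::] &
    (s = inr a /\ tau = [:: inl be]) \/
    (exists Y, s = inl Y /\ tau = [:: inr (Y, inr a); inl be])].

Inductive lift : Sym -> Sym -> Prop :=
| lift_refl s : lift s s
| lift_step s Z al be s' : (Z, al ++ s :: be) \in P -> cf_seq P al [::] ->
    cf_seq P be [::] -> lift (inl Z) s' -> lift s s'.

(* For a
   left corner (X, s): climb from s to s', then continue the rule containing
   s' with a, and remember to complete its left-hand side into X. *)
Definition step_task (T : task) (a : A) (tau : seq task) : Prop :=
  match T with
  | inl g => step_seq g a tau
  | inr (X, s) => exists s' Z al be tau0,
      [/\ lift s s', (Z, al ++ s' :: be) \in P, cf_seq P al [::],
          step_seq be a tau0 & tau = rcons tau0 (inr (X, inl Z))]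
  end.

Lemma step_seq_complete g a w : cf_seq P g (a :: w) ->
  exists tau, step_seq g a tau /\ consume_all tau w.
Proof.
move=> /((proj2 first_letter) _ _)/(_ a w erefl).
move=> [al [s [be [u [v [-> Hal [[-> ->]|[Y [-> HY]]] Hbe ->]]]]]].
  exists [:: inl be]; split; last exact/consume_all1.
  by exists al, (inr a), be; split => //; left.
exists [:: inr (Y, inr a); inl be]; split; last by apply: ca_cons => //; apply/consume_all1.
by exists al, (inl Y), be; split => //; right; exists Y.
Qed.

Lemma step_seq_sound g a tau w :
  step_seq g a tau -> consume_all tau w -> cf_seq P g (a :: w).
Proof.
move=> [al [s [be [-> Hal Hs]]]] Hw; rewrite -[a :: w]cat0s; apply: cf_seq_cat => //.
case: Hs => [[-> Ht]|[Y [-> Ht]]]; subst tau.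
  by move/consume_all1: Hw => Hbe; rewrite -[a :: w]cat1s; exact: cf_cons (cf_term _ a) Hbe.
inversion Hw; subst; move/consume_all1: H3 => Hbe.
rewrite -cat_cons; apply: cf_cons Hbe.
by rewrite -[a :: u]cat1s; apply: left_corner_sound H1 _ _; exact: cf_term.
Qed.

Lemma lift_left_corner X s s' w : lift s s' -> left_corner X s' w -> left_corner X s w.
Proof.
elim=> // s0 Z al be s1 Hin Hal Hbe _ IH H.
by rewrite -[w]cat0s; exact: lc_step Hin Hal Hbe (IH H).
Qed.

Lemma step_task_complete T a w : consume T (a :: w) ->
  exists tau, step_task T a tau /\ consume_all tau w.
Proof.
case: T => [g|[X s]] /=; first exact: step_seq_complete.
move: {1 3}(a :: w) (erefl (a :: w)) => w' Hw H.
elim: H a w Hw => // Z al s' be v u Hin Hal Hbe HZ IH a w.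
case: v Hbe => [|a' v'] Hbe /= Hw.
  have [tau [[s'' [Z' [al' [be' [tau0 [HU Hin' Hal' Hst ->]]]]]] Hc]] := IH a w Hw.
  exists (rcons tau0 (inr (X, inl Z'))); split => //.
  by exists s'', Z', al', be', tau0; split => //; exact: lift_step Hin Hal Hbe HU.
case: Hw => <- <-; have [tau0 [Hst Hc]] := step_seq_complete Hbe.
exists (rcons tau0 (inr (X, inl Z))); split.
  by exists s', Z, al, be, tau0; split => //; exact: lift_refl.
by rewrite -cats1; apply: consume_all_cat Hc _; apply/consume_all1.
Qed.

Lemma step_task_sound T a tau w :
  step_task T a tau -> consume_all tau w -> consume T (a :: w).
Proof.
case: T => [g|[X s]] /=; first exact: step_seq_sound.
move=> [s' [Z [al [be [tau0 [HU Hin Hal Hst ->]]]]]].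
rewrite -cats1 => /consume_all_split [w1 [w2 [-> H1 /consume_all1 H2]]].
apply: lift_left_corner HU _; rewrite -cat_cons; apply: lc_step Hin Hal _ H2.
exact: step_seq_sound Hst H1.
Qed.

(* At most three tasks remain after a step: the bound behind the pushes. *)
Lemma step_task_size T a tau : step_task T a tau -> (size tau <= 3)%N.
Proof.
have seq_size g tau' : step_seq g a tau' -> (size tau' <= 2)%N.
  by move=> [al [s [be [_ _ [[_ ->]|[Y [_ ->]]]]]]].
case: T => [g /seq_size Hs|[X s] [s' [Z [al [be [tau0 [_ _ _ /seq_size Hs ->]]]]]]].
  exact: leq_trans Hs _.
by rewrite size_rcons.
Qed.

Inductive drop_nullable : seq task -> seq task -> Prop :=
| dn_nil : drop_nullable [::] [::]
| dn_keep T t t' : drop_nullable t t' -> drop_nullable (T :: t) (T :: t')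
| dn_drop T t t' : consume T [::] -> drop_nullable t t' -> drop_nullable (T :: t) t'.

Inductive consume_ne : seq task -> seq A -> Prop :=
| cne_nil : consume_ne [::] [::]
| cne_cons T ts u v : u <> [::] -> consume T u -> consume_ne ts v ->
    consume_ne (T :: ts) (u ++ v).

Lemma consume_ne_cat t1 t2 w1 w2 :
  consume_ne t1 w1 -> consume_ne t2 w2 -> consume_ne (t1 ++ t2) (w1 ++ w2).
Proof. by elim=> //= T ts u v Hu HT _ IH H2; rewrite -catA; apply: cne_cons => //; exact: IH. Qed.

Lemma consume_ne_cons T ts w : consume_ne (T :: ts) w ->
  exists u v, [/\ u <> [::], consume T u, consume_ne ts v & w = u ++ v].
Proof. by move=> H; inversion H; subst; exists u, v. Qed.

Lemma consume_ne_nil w : consume_ne [::] w -> w = [::].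
Proof. by move=> H; inversion H. Qed.

Lemma drop_nullable_sound t t' w : drop_nullable t t' -> consume_all t' w -> consume_all t w.
Proof.
move=> H; elim: H w => [|T t0 t0' _ IH|T t0 t0' HT _ IH] w Hw //.
  by inversion Hw; subst; apply: ca_cons => //; exact: IH.
by rewrite -[w]cat0s; apply: ca_cons => //; exact: IH.
Qed.

Lemma drop_nullable_complete t w : consume_all t w ->
  exists t', drop_nullable t t' /\ consume_ne t' w.
Proof.
elim=> [|T ts [|a u] v HT _ [t' [Hd Hc]]].
- by exists [::]; split; [exact: dn_nil | exact: cne_nil].
- by exists t'; split => //; exact: dn_drop.
- by exists (T :: t'); split; [exact: dn_keep | exact: cne_cons].
Qed.

Lemma drop_nullable_size t t' : drop_nullable t t' -> (size t' <= size t)%N.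
Proof. by elim=> //= T t0 t0' _ _ /leqW. Qed.

Lemma drop_nullable_sub t t' : drop_nullable t t' -> {subset t' <= t}.
Proof.
elim=> [|T t0 t0' _ IH|T t0 t0' _ _ IH] q //.
  by rewrite !inE => /orP [->|/IH ->]; rewrite ?orbT.
by move/IH; rewrite inE => ->; rewrite orbT.
Qed.

Definition next_tasks (T : task) (a : A) (tau : seq task) : Prop :=
  exists tau0, step_task T a tau0 /\ drop_nullable tau0 tau.

Lemma next_tasks_sound T a tau w :
  next_tasks T a tau -> consume_all tau w -> consume T (a :: w).
Proof. by move=> [tau0 [Hst Hd]] /(drop_nullable_sound Hd); exact: step_task_sound. Qed.

Lemma next_tasks_complete T a w : consume T (a :: w) ->
  exists tau, next_tasks T a tau /\ consume_ne tau w.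
Proof.
move/step_task_complete => [tau0 [Hst /drop_nullable_complete [tau [Hd Hc]]]].
by exists tau; split => //; exists tau0.
Qed.

Lemma next_tasks_size T a tau : next_tasks T a tau -> (size tau <= 3)%N.
Proof. by move=> [tau0 [/step_task_size + /drop_nullable_size]] => /[swap]; exact: leq_trans. Qed.

End Grammar.

Section TaskSet.
(* The finitely many tasks that can ever occur: derive a suffix of a
   right-hand side (or of the start word), or any left-corner obligation. *)
Variables N A : finType.
Variable P : seq (N * seq (N + A)%type).
Variable S0 : N.
Local Notation Sym := (N + A)%type.

Definition suffixes (r : seq Sym) : seq (seq Sym) :=
  [seq drop k r | k <- iota 0 (size r).+1].
Definition rule_suffixes : seq (seq Sym) :=
  flatten [seq suffixes r | r <- [:: inl S0] :: map snd P].
Definition task_set : seq (task N A) :=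
  map inl rule_suffixes ++ map inr (enum {: N * Sym}).

Lemma mem_suffixes g r : g \in suffixes r <-> exists al, r = al ++ g.
Proof.
split; first by move/mapP => [k _ ->]; exists (take k r); rewrite cat_take_drop.
move=> [al ->]; apply/mapP; exists (size al); last by rewrite drop_size_cat.
by rewrite mem_iota /= add0n size_cat ltnS leq_addr.
Qed.

Lemma mem_rule_suffixes g : g \in rule_suffixes <->
  exists2 r, r \in [:: inl S0] :: map snd P & exists al, r = al ++ g.
Proof.
split; first by move/flatten_mapP => [r Hr /mem_suffixes Hg]; exists r.
by move=> [r Hr /mem_suffixes Hg]; apply/flatten_mapP; exists r.
Qed.

Lemma rule_suffixes_suffix g al be : g \in rule_suffixes -> g = al ++ be ->
  be \in rule_suffixes.
Proof.
move/mem_rule_suffixes => [r Hr [al0 Er]] Eg; apply/mem_rule_suffixes.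
by exists r => //; exists (al0 ++ al); rewrite Er Eg catA.
Qed.

Lemma rule_in_suffixes Z r : (Z, r) \in P -> r \in rule_suffixes.
Proof.
move=> H; apply/mem_rule_suffixes; exists r; last by exists [::].
by rewrite inE; apply/orP; right; apply/mapP; exists (Z, r).
Qed.

Lemma start_in_suffixes : [:: inl S0] \in rule_suffixes.
Proof. by apply/mem_rule_suffixes; exists [:: inl S0]; [rewrite inE eqxx | exists [::]]. Qed.

Lemma nil_in_suffixes : [::] \in rule_suffixes.
Proof. by apply: (rule_suffixes_suffix start_in_suffixes (al := [:: inl S0])); rewrite cats0. Qed.

Lemma inr_task_set q : inr q \in task_set.
Proof. by rewrite mem_cat; apply/orP; right; apply/mapP; exists q; rewrite ?mem_enum. Qed.

Lemma inl_task_set g : (inl g \in task_set) = (g \in rule_suffixes).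
Proof.
rewrite mem_cat; apply/orP/idP => [[/mapP [g' H [->]] //|/mapP [q _] //]|H].
by left; apply/mapP; exists g.
Qed.

Lemma step_seq_closed g a tau : g \in rule_suffixes -> step_seq P g a tau ->
  {subset tau <= task_set}.
Proof.
move=> Hg [al [s [be [Eg _ Hs]]]] q.
have Hbe : be \in rule_suffixes by apply: (rule_suffixes_suffix (al := al ++ [:: s])) Hg _; rewrite -catA.
case: Hs => [[_ ->]|[Y [_ ->]]]; first by rewrite mem_seq1 => /eqP ->; rewrite inl_task_set.
by rewrite in_cons mem_seq1 => /orP [/eqP ->|/eqP ->]; rewrite ?inr_task_set ?inl_task_set.
Qed.

Lemma step_task_closed T a tau : T \in task_set -> step_task P T a tau ->
  {subset tau <= task_set}.
Proof.
case: T => [g|[X s]] /=; first by rewrite inl_task_set; exact: step_seq_closed.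
move=> _ [s' [Z [al [be [tau0 [_ Hin _ Hst ->]]]]]] q.
rewrite -cats1 mem_cat => /orP [|]; last by rewrite mem_seq1 => /eqP ->; rewrite inr_task_set.
apply: (step_seq_closed _ Hst).
by apply: (rule_suffixes_suffix (al := al ++ [:: s'])) (rule_in_suffixes Hin) _; rewrite -catA.
Qed.

Lemma next_tasks_closed T a tau : T \in task_set -> next_tasks P T a tau ->
  {subset tau <= task_set}.
Proof. by move=> HT [tau0 [Hst /drop_nullable_sub Hd]] q /Hd; exact: step_task_closed HT Hst q. Qed.

End TaskSet.

Section Simulation.
Variables (n : nat) (N A : finType).
Hypothesis n_ge2 : (2 <= n)%N.
Variable P : seq (N * seq (N + A)%type).
Variable S0 : N.

Definition i0 : 'I_n := Ordinal (leq_trans (isT : (1 <= 2)%N) n_ge2).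
Definition i1 : 'I_n := Ordinal n_ge2.
Lemma i0_neq_i1 : i0 != i1. Proof. by []. Qed.

Definition state := seq_sub (task_set P S0).

Lemma start_in_task_set : (inl [:: inl S0] : task N A) \in task_set P S0.
Proof. by rewrite inl_task_set start_in_suffixes. Qed.

Definition start_state : state := SeqSub start_in_task_set.
Definition to_state (q : task N A) : state := insubd start_state q.

Lemma to_stateK q : q \in task_set P S0 -> val (to_state q) = q.
Proof. exact: insubdK. Qed.

Definition done_state : state := to_state (inl [::]).

Lemma done_stateE : val done_state = inl [::].
Proof. by rewrite to_stateK // inl_task_set nil_in_suffixes. Qed.

(* A label (pop, push_below, push_top) pops at most one stack symbol and then
   pushes at most two, push_top ending on top. *)
Definition sim_label := (option state * option state * option state)%type.
Definition opt (p : option state) : seq state := if p is Some q then [:: q] else [::].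

Local Notation stack_of := (stack_code i0 i1).

Definition bracket_label (l : sim_label) : seq (paren n) :=
  let: (po, pbelow, ptop) := l in
  (if po is Some y then pop_word i0 i1 y else [::]) ++
  (if pbelow is Some q then push_word i0 i1 q else [::]) ++
  (if ptop is Some q then push_word i0 i1 q else [::]).

(* Reading a from state x yields the remaining tasks tau: continue with the
   first and push the others; or, if none is left, pop the next task from the
   stack, or stop in [done_state]. *)
Definition sim_step (a : A) (x : state) (l : sim_label) (y : state) : Prop :=
  let: (po, pbelow, ptop) := l in
  exists tau, next_tasks P (val x) a tau /\
   ((po = None /\ tau = map val (y :: opt ptop ++ opt pbelow)) \/
    (po = Some y /\ ptop = None /\ pbelow = None /\ tau = [::]) \/
    (po = None /\ ptop = None /\ pbelow = None /\ tau = [::] /\ val y = inl [::])).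

Definition sim_final (x : state) : Prop := consume P (val x) [::].

Local Notation accepts := (dyck_accepts sim_step bracket_label sim_final).

Lemma bracket_run_push_label s pbelow ptop :
  bracket_run s (bracket_label (None, pbelow, ptop)) =
  Some (stack_of (opt ptop ++ opt pbelow) ++ s).
Proof.
rewrite /bracket_label cat0s.
case: ptop => [qt|]; case: pbelow => [qb|]; rewrite ?cats0 ?bracket_run_push //.
- rewrite (bracket_run_catS _ (bracket_run_push _ _ _ _)) bracket_run_push.
  by rewrite /stack_code /= cats0 catA.
- by rewrite /stack_code /= cats0.
- by rewrite /stack_code /= cats0.
Qed.

Lemma sound_step a x l y u stk :
  sim_step a x l y -> bracket_run [::] u = Some (stack_of stk) ->
  (exists v, dyck ((u ++ bracket_label l) ++ v)) ->
  exists stk', bracket_run [::] (u ++ bracket_label l) = Some (stack_of stk') /\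
    forall w, consume_all P (map val (y :: stk')) w ->
              consume_all P (map val (x :: stk)) (a :: w).
Proof.
case: l => [[po pbelow] ptop] [tau [Hnext Hcase]] Hr; move: Hnext.
case: Hcase => [[-> ->]|[[-> [-> [-> ->]]]|[-> [-> [-> [-> Ey]]]]]] Hnext Hext.
- exists (opt ptop ++ opt pbelow ++ stk); split.
    by rewrite (bracket_run_catS _ Hr) bracket_run_push_label !stack_code_cat catA.
  move=> w; rewrite catA -cat_cons map_cat => /consume_all_split [w1 [w2 [-> H1 H2]]].
  by rewrite -cat_cons; apply: ca_cons H2; exact: next_tasks_sound Hnext H1.
- move: Hext => [v /dyckE]; rewrite -catA (bracket_run_catS _ Hr) /bracket_label !cats0.
  rewrite bracket_run_cat; case E: bracket_run => [s'|] // _.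
  have [stk' [Estk Es']] := bracket_run_pop_stack i0_neq_i1 E; subst stk s'.
  exists stk'; split; first by rewrite (bracket_run_catS _ Hr) E.
  move=> w Hw; rewrite -[a :: w]cat1s; apply: ca_cons Hw.
  by apply: (next_tasks_sound Hnext); exact: ca_nil.
- exists stk; split; first by rewrite /bracket_label /= cats0.
  move=> w; rewrite map_cons Ey => /(consume_all_split (t1 := [:: inl [::]])) [w1 [w2 [-> H1 H2]]].
  move/consume_all1/cf_seq_nil: H1 => ->; rewrite -[a :: w2]cat1s; apply: ca_cons H2.
  by apply: (next_tasks_sound Hnext); exact: ca_nil.
Qed.

Lemma sim_sound w u x stk : accepts u x w ->
  bracket_run [::] u = Some (stack_of stk) -> consume_all P (map val (x :: stk)) w.
Proof.
elim: w u x stk => [|a w IH] u x stk /=.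
  move=> [Hf /dyckE ->] [] /esym /stack_code_nil ->.
  exact/consume_all1.
move=> [l [y [Hs Ha]]] Hr.
have [stk' [Hr' Hback]] := sound_step Hs Hr (dyck_accepts_prefix Ha).
exact: Hback (IH _ _ _ Ha Hr').
Qed.

Definition sim_inv (x : state) (stk : seq state) (w : seq A) : Prop :=
  (w = [::] /\ sim_final x /\ stk = [::]) \/ consume_ne P (map val (x :: stk)) w.

Lemma opt_split (ps : seq state) : (size ps <= 2)%N ->
  exists p1 p2, ps = opt p1 ++ opt p2.
Proof.
case: ps => [|q1 [|q2 [|q3 ps]]] // _.
- by exists None, None.
- by exists (Some q1), None.
- by exists (Some q1), (Some q2).
Qed.

Lemma next_tasks_states (x : state) a tau : next_tasks P (val x) a tau ->
  map val (map to_state tau) = tau.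
Proof.
move=> Hnext; rewrite -map_comp; apply: map_id_in => q Hq /=.
exact/to_stateK/(next_tasks_closed (valP x) Hnext).
Qed.

Lemma complete_step a x stk w : consume_ne P (map val (x :: stk)) (a :: w) ->
  exists l y stk', [/\ sim_step a x l y,
    forall u, bracket_run [::] u = Some (stack_of stk) ->
              bracket_run [::] (u ++ bracket_label l) = Some (stack_of stk')
    & sim_inv y stk' w].
Proof.
move/consume_ne_cons => [u0 [v [Hu Hx Hstk Ew]]].
case: u0 Hu Hx Ew => [//|a' u1] _ Hx [Ea ->]; subst a'.
have [[|q ps] [Hnext Hne]] := next_tasks_complete Hx.
  rewrite (consume_ne_nil Hne); case: stk Hstk => [|y stk'] Hstk.
    exists (None, None, None), done_state, [::]; split.
    - by exists [::]; split => //; right; right; rewrite done_stateE.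
    - by move=> u Hr; rewrite /bracket_label !cats0.
    - left; rewrite (consume_ne_nil Hstk) /sim_final done_stateE.
      by split; [|split; [exact: cf_nil|]].
  exists (Some y, None, None), y, stk'; split; last by right.
  - by exists [::]; split => //; right; left.
  - by move=> u Hr; rewrite (bracket_run_catS _ Hr) /bracket_label !cats0 bracket_run_pop.
have Hstates := next_tasks_states Hnext.
have [pt [pb Eps]] : exists pt pb, map to_state ps = opt pt ++ opt pb.
  by apply: opt_split; rewrite size_map -ltnS; exact: next_tasks_size Hnext.
exists (None, pb, pt), (to_state q), (opt pt ++ opt pb ++ stk); split.
- by exists (q :: ps); split => //; left; rewrite -Eps -map_cons Hstates.
- move=> u Hr; rewrite (bracket_run_catS _ Hr) bracket_run_push_label.
  by rewrite !stack_code_cat catA.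
- right; rewrite catA -Eps -cat_cons -map_cons map_cat Hstates.
  exact: consume_ne_cat Hne Hstk.
Qed.

Lemma sim_complete w u x stk : sim_inv x stk w ->
  bracket_run [::] u = Some (stack_of stk) -> accepts u x w.
Proof.
elim: w u x stk => [|a w IH] u x stk.
  move=> [[_ [Hf ->]]|/consume_ne_cons [[|? ?] [v [Hu _ _ /esym /eqP]]]] //= Hr.
  by split => //; apply/dyckE.
move=> [[//]|/complete_step [l [y [stk' [Hs Hrun Hinv]]]]] Hr.
by exists l, y; split => //; exact: IH Hinv (Hrun _ Hr).
Qed.

Lemma cf_sym_dyck_accepts w : cf_sym P (inl S0) w <-> accepts [::] start_state w.
Proof.
rewrite -cf_seq1; split.
  move=> Hw; apply: (sim_complete (stk := [::])) => //.
  case: w Hw => [|a w] Hw; first by left.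
  right; rewrite /= -[a :: w]cats0; apply: cne_cons => //; exact: cne_nil.
by move/(sim_sound (stk := [::]))/(_ erefl)/consume_all1.
Qed.

End Simulation.

Theorem mainTheorem8
  (R : pzSemiRingType) (R0 : seq R)
  (hidem : idempotent_sr R) (hR0 : sr_fin_gen R0)
  (B : lSemiModType R) (B0 : seq B) (hB0 : smod_fin_gen B0)
  (n : nat) (hn : (2 <= n)%N)
  (alpha : seq (paren n) -> R) (halpha : monoid_morph alpha)
  (b0 b1 : B)
  (hD : forall w : seq (paren n), sle b1 (alpha w *: b0) <-> dyck w)
  (hprime : forall c1 c2 : B, sle b1 (c1 + c2) -> sle b1 c1 \/ sle b1 c2) :
  forall (A : finType) (L : seq A -> Prop), context_free L ->
    exists (X : finType) (o : X -> B) (t : A -> X -> X -> R) (x0 : X),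
      forall w : seq A, L w <-> sle b1 (wsem o t x0 w).
Proof.
move=> A L [N [S0 [P HL]]].
have n_gt0 : (0 < n)%N by exact: leq_trans hn.
exists (state P S0), (dyck_out (sim_final (S0 := S0)) b0),
  (dyck_trans (sim_step (S0 := S0)) (bracket_label hn (S0 := S0)) alpha),
  (start_state P S0) => w.
rewrite HL (cf_sym_dyck_accepts hn) -(wsem_dyck_accepts _ _ _ n_gt0 halpha hD hprime).
by rewrite (proj1 halpha) scale1r.
Qed.
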